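(* Under the standing assumptions below, if $x$ is sufficiently large (in terms of $\epsilon$), then $U+V\subseteq Q$, where the sum is taken modulo $36$.
   Context: Standing assumptions and notation: $\epsilon>0$ is fixed, $\delta_0=\frac14-\frac{2}{\pi^2}$, and $A\subseteq[1,x]\cap\mathbb{N}$ is a set with $|A|>(\delta_0+\epsilon)x$ such that $A+A=\{a+b:a,b\in A\}$ contains no squarefree integer, and $A$ is not a subset of $4\mathbb{N}$, nor of $9\mathbb{N}$, nor of $\{n\in\mathbb{N}:n\equiv 2\pmod 4\}$. For $a\in\{0,\dots,35\}$ put $\delta_a=\frac{36\cdot\#\{n\in A: n\equiv a\pmod{36}\}}{x}$. Let $U$ be the set of residues $a\bmod 36$ with $\delta_a>1-\frac{9}{\pi^2}+\epsilon/100$, let $V$ be the set of residues $a\bmod 36$ with $\delta_a>0$, and let $Q=\{0,4,8,9,12,16,18,20,24,27,28,32\}$ (the residue classes mod $36$ containing no squarefree integers). *)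

From Stdlib Require Export Reals Lra Lia ZArith Arith List.
Open Scope R_scope.

Definition delta0 : R := / 4 - 2 / (PI ^ 2).

Definition squarefree (n : nat) : Prop :=
  (0 < n)%nat /\ forall d : nat, Nat.divide (d * d) n -> d = 1%nat.

Definition subset_1x (A : nat -> bool) (x : R) : Prop :=
  forall n : nat, A n = true -> (1 <= n)%nat /\ INR n <= x.

(* For A ⊆ [1,x], every element is < up x, so this list covers A. *)
Definition range_upto (x : R) : list nat := seq 0 (Z.to_nat (up x)).

Definition cardA (A : nat -> bool) (x : R) : nat :=
  length (filter A (range_upto x)).

Definition count_res (A : nat -> bool) (x : R) (a : nat) : nat :=
  length (filter (fun n => andb (A n) (Nat.eqb (n mod 36) a)) (range_upto x)).

Definition delta_res (A : nat -> bool) (x : R) (a : nat) : R :=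
  36 * INR (count_res A x a) / x.

(* Q: residues mod 36 containing no squarefree integers. *)
Definition Qset : list nat := (0 :: 4 :: 8 :: 9 :: 12 :: 16 :: 18 :: 20 :: 24 :: 27 :: 28 :: 32 :: nil)%nat.

Definition inU (A : nat -> bool) (x eps : R) (a : nat) : Prop :=
  (a < 36)%nat /\ delta_res A x a > 1 - 9 / (PI ^ 2) + eps / 100.

Definition inV (A : nat -> bool) (x : R) (a : nat) : Prop :=
  (a < 36)%nat /\ delta_res A x a > 0.

(* Let u, v be as in the statement, pick b in A with b = v mod 36, and suppose that
   r = u + v mod 36 is admissible, i.e. divisible neither by 4 nor by 9.  As A + A contains
   no squarefree integer, n |-> n + b maps the elements of A in the class u to non-squarefree
   numbers of the class r below 2x + 1.  We show that such numbers have relative density at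
   most 1 - 9/pi^2 + eps/100 in their class, contradicting u in U.

   The density bound is a sieve.  For a level P let L be the square of the product of the
   d <= P + 1 coprime to 6, and call m sieve-free when no such d^2 divides m.  This property
   is L-periodic and L is a unit mod 36, so the c sieve-free residues mod L are equidistributed
   among the 36 classes; a non-squarefree m in an admissible class is either not sieve-free or
   divisible by d^2 for some d > P, which happens O(x/P + sqrt x) times.  Finally
   c/L >= 9/pi^2: every n <= m^2 is k^2 s with s squarefree (hence sieve-free and admissible),
   and sum_k 1/k^2 <= pi^2/6, which we prove with the Wallis-type integrals of cos^(2n) and
   x^2 cos^(2n). *)

From Stdlib Require Import Reals Lra Lia ZArith Arith List Classical Nsatz.
From Coquelicot Require Import Coquelicot.
Open Scope R_scope.

Lemma is_RInt_of_derive (F f : R -> R) (a b : R) :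
  (forall x, is_derive F x (f x)) -> (forall x, ex_derive f x) ->
  is_RInt f a b (F b - F a).
Proof.
  intros HF Hf. apply (is_RInt_derive F f a b).
  - intros x _. apply HF.
  - intros x _. apply (@ex_derive_continuous R_AbsRing R_NormedModule), Hf.
Qed.

Lemma is_RInt_lincomb2 (f g : R -> R) (a b u v al be : R) :
  is_RInt f a b u -> is_RInt g a b v ->
  is_RInt (fun x => al * f x + be * g x) a b (al * u + be * v).
Proof.
  intros Hf Hg.
  apply (is_RInt_plus (V := R_NormedModule)); apply (is_RInt_scal (V := R_NormedModule)); assumption.
Qed.

Lemma is_RInt_lincomb3 (f g h : R -> R) (a b u v w al be ga : R) :
  is_RInt f a b u -> is_RInt g a b v -> is_RInt h a b w ->
  is_RInt (fun x => al * f x + be * g x + ga * h x) a b (al * u + be * v + ga * w).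
Proof.
  intros Hf Hg Hh. apply (is_RInt_plus (V := R_NormedModule)).
  - apply is_RInt_lincomb2; assumption.
  - apply (is_RInt_scal (V := R_NormedModule)); assumption.
Qed.

Lemma is_RInt_same (f : R -> R) (a b u v : R) : is_RInt f a b u -> is_RInt f a b v -> u = v.
Proof.
  intros Hu Hv. rewrite <- (is_RInt_unique (V := R_CompleteNormedModule) _ _ _ _ Hu).
  exact (is_RInt_unique (V := R_CompleteNormedModule) _ _ _ _ Hv).
Qed.

Definition wallis_I (n : nat) : R := RInt (fun x => cos x ^ (2 * n)) 0 (PI / 2).
Definition wallis_J (n : nat) : R := RInt (fun x => x * x * cos x ^ (2 * n)) 0 (PI / 2).

Lemma wallis_I_correct n : is_RInt (fun x => cos x ^ (2 * n)) 0 (PI / 2) (wallis_I n).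
Proof.
  apply (RInt_correct (V := R_CompleteNormedModule)), (ex_RInt_continuous (V := R_CompleteNormedModule)).
  intros x _. apply (@ex_derive_continuous R_AbsRing R_NormedModule). auto_derive. exact I.
Qed.

Lemma wallis_J_correct n : is_RInt (fun x => x * x * cos x ^ (2 * n)) 0 (PI / 2) (wallis_J n).
Proof.
  apply (RInt_correct (V := R_CompleteNormedModule)), (ex_RInt_continuous (V := R_CompleteNormedModule)).
  intros x _. apply (@ex_derive_continuous R_AbsRing R_NormedModule). auto_derive. exact I.
Qed.

Lemma cos_pow_2S n x : cos x ^ (2 * S n) = cos x ^ (2 * n) * cos x * cos x.
Proof. replace (2 * S n)%nat with (S (S (2 * n))) by lia. simpl. ring. Qed.

Lemma derive_cos_sin n x :
  is_derive (fun x => cos x ^ S (2 * n) * sin x) x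
    ((2 * INR n + 2) * cos x ^ (2 * S n) + - (2 * INR n + 1) * cos x ^ (2 * n)).
Proof.
  auto_derive; [exact I|]. rewrite cos_pow_2S.
  change (match (n + (n + 0))%nat with 0%nat => 1 | S _ => INR (n + (n + 0)) + 1 end)
    with (INR (S (2 * n))).
  rewrite S_INR, mult_INR. simpl (INR 2).
  generalize (sin2_cos2 x); unfold Rsqr; intro H.
  set (c := cos x) in *; set (s := sin x) in *; set (w := c ^ (2 * n)) in *.
  nsatz.
Qed.

Lemma derive_wallis_J n x :
  is_derive (fun x => x * cos x ^ S (S (2 * n)) + (INR n + 1) * (x * x) * (cos x ^ S (2 * n) * sin x)) x
    (1 * cos x ^ (2 * S n) + - ((INR n + 1) * (2 * INR n + 1)) * (x * x * cos x ^ (2 * n))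
     + 2 * (INR n + 1) * (INR n + 1) * (x * x * cos x ^ (2 * S n))).
Proof.
  auto_derive; [exact I|]. rewrite !cos_pow_2S.
  change (match (n + (n + 0))%nat with 0%nat => 1 | S _ => INR (n + (n + 0)) + 1 end)
    with (INR (S (2 * n))).
  rewrite ?S_INR, ?mult_INR. simpl (INR 2).
  generalize (sin2_cos2 x); unfold Rsqr; intro H.
  set (c := cos x) in *; set (s := sin x) in *; set (w := c ^ (2 * n)) in *.
  nsatz.
Qed.

(* Integration by parts, packaged as the fundamental theorem of calculus for
   the two antiderivatives above, gives the two Wallis-type recurrences. *)
Lemma wallis_I_rec n : (2 * INR n + 2) * wallis_I (S n) = (2 * INR n + 1) * wallis_I n.
Proof.
  assert (FTC := is_RInt_of_derive _ _ 0 (PI / 2) (derive_cos_sin n)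
                   (ltac:(intros x; auto_derive; exact I))).
  assert (LIN := is_RInt_lincomb2 _ _ _ _ _ _ (2 * INR n + 2) (- (2 * INR n + 1))
                   (wallis_I_correct (S n)) (wallis_I_correct n)).
  assert (E := is_RInt_same _ _ _ _ _ FTC LIN).
  cbv beta in E. rewrite cos_PI2, sin_0, pow_ne_zero in E by lia. lra.
Qed.

Lemma wallis_J_rec n :
  wallis_I (S n) - (INR n + 1) * (2 * INR n + 1) * wallis_J n
  + 2 * (INR n + 1) * (INR n + 1) * wallis_J (S n) = 0.
Proof.
  assert (FTC := is_RInt_of_derive _ _ 0 (PI / 2) (derive_wallis_J n)
                   (ltac:(intros x; auto_derive; exact I))).
  assert (LIN := is_RInt_lincomb3 _ _ _ _ _ _ _ _ 1 (- ((INR n + 1) * (2 * INR n + 1)))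
                   (2 * (INR n + 1) * (INR n + 1))
                   (wallis_I_correct (S n)) (wallis_J_correct n) (wallis_J_correct (S n))).
  assert (E := is_RInt_same _ _ _ _ _ FTC LIN).
  cbv beta in E. rewrite cos_PI2, sin_0, !pow_ne_zero in E by lia. lra.
Qed.

Lemma wallis_I_0 : wallis_I 0 = PI / 2.
Proof.
  apply (is_RInt_unique (V := R_CompleteNormedModule)).
  replace (PI / 2) with (PI / 2 - 0) at 2 by ring.
  apply (is_RInt_of_derive (fun x => x)).
  - intros x. auto_derive; [exact I | simpl; ring].
  - intros x. auto_derive. exact I.
Qed.

Lemma wallis_J_0 : wallis_J 0 = PI ^ 3 / 24.
Proof.
  apply (is_RInt_unique (V := R_CompleteNormedModule)).
  replace (PI ^ 3 / 24) with ((PI / 2) * (PI / 2) * (PI / 2) / 3 - 0 * 0 * 0 / 3) by field.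
  apply (is_RInt_of_derive (fun x => x * x * x / 3)).
  - intros x. auto_derive; [exact I | simpl; field].
  - intros x. auto_derive. exact I.
Qed.

Lemma wallis_I_pos n : 0 < wallis_I n.
Proof.
  induction n as [|n IH].
  - rewrite wallis_I_0. generalize PI_RGT_0. lra.
  - generalize (wallis_I_rec n) (pos_INR n). intros E Hn. nra.
Qed.

Lemma wallis_J_nonneg n : 0 <= wallis_J n.
Proof.
  apply (is_RInt_ge_0 (fun x => x * x * cos x ^ (2 * n)) 0 (PI / 2)); [generalize PI_RGT_0; lra | apply wallis_J_correct |].
  intros x _. apply Rmult_le_pos; [nra |]. rewrite pow_mult. apply pow_le. nra.
Qed.

Fixpoint Rsum_below (f : nat -> R) (n : nat) : R :=
  match n with O => 0 | S m => Rsum_below f m + f m end.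

Definition inv_sq_sum (n : nat) : R := Rsum_below (fun k => / (INR (S k) * INR (S k))) n.

Lemma inv_sq_telescope n :
  / (INR (S n) * INR (S n)) = 2 * (wallis_J n / wallis_I n - wallis_J (S n) / wallis_I (S n)).
Proof.
  generalize (wallis_I_rec n) (wallis_J_rec n) (wallis_I_pos n) (pos_INR n). intros W M P0 Hn.
  rewrite S_INR.
  assert (EJ : wallis_J (S n) = ((INR n + 1) * (2 * INR n + 1) * wallis_J n - wallis_I (S n))
                                / (2 * (INR n + 1) * (INR n + 1))).
  { apply (Rmult_eq_reg_l (2 * (INR n + 1) * (INR n + 1))); [| nra]. field_simplify; lra. }
  assert (EI : wallis_I (S n) = (2 * INR n + 1) / (2 * INR n + 2) * wallis_I n).
  { apply (Rmult_eq_reg_l (2 * INR n + 2)); [| lra]. rewrite W. field. lra. }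
  rewrite EJ, EI. field. repeat split; lra.
Qed.

Lemma basel_upper n : inv_sq_sum n <= PI ^ 2 / 6.
Proof.
  assert (T : forall m, inv_sq_sum m = 2 * (wallis_J 0 / wallis_I 0 - wallis_J m / wallis_I m)).
  { induction m as [|m IH]; unfold inv_sq_sum in *; cbn [Rsum_below]; [ring |].
    rewrite IH, inv_sq_telescope. ring. }
  rewrite T, wallis_J_0, wallis_I_0.
  assert (0 <= wallis_J n / wallis_I n)
    by (apply Rdiv_le_0_compat; [apply wallis_J_nonneg | apply wallis_I_pos]).
  replace (PI ^ 3 / 24 / (PI / 2)) with (PI ^ 2 / 12) by (field; generalize PI_RGT_0; lra).
  lra.
Qed.

Section Counting.
Local Open Scope nat_scope.

Definition cnt (P : nat -> bool) (a n : nat) : nat := length (filter P (seq a n)).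

Lemma cnt_add P a n m : cnt P a (n + m) = cnt P a n + cnt P (a + n) m.
Proof. unfold cnt. rewrite seq_app, filter_app, length_app. reflexivity. Qed.

Lemma cnt_S P a n : cnt P a (S n) = cnt P a n + (if P (a + n) then 1 else 0).
Proof.
  rewrite <- Nat.add_1_r, cnt_add. unfold cnt at 2. simpl. destruct (P (a + n)); reflexivity.
Qed.

Lemma cnt_ext P Q a n : (forall k, a <= k < a + n -> P k = Q k) -> cnt P a n = cnt Q a n.
Proof.
  induction n as [|n IH]; intros H; [reflexivity |].
  rewrite !cnt_S, IH by (intros; apply H; lia). rewrite (H (a + n)) by lia. reflexivity.
Qed.

Lemma cnt_mono P Q a n : (forall k, a <= k < a + n -> P k = true -> Q k = true) ->
  cnt P a n <= cnt Q a n.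
Proof.
  induction n as [|n IH]; intros H; [reflexivity |].
  rewrite !cnt_S. assert (IHn := IH (fun k Hk => H k ltac:(lia))).
  specialize (H (a + n) ltac:(lia)). destruct (P (a + n)), (Q (a + n)); try lia; discriminate (H eq_refl).
Qed.

Lemma cnt_false a n : cnt (fun _ => false) a n = 0.
Proof. induction n as [|n IH]; [reflexivity |]. rewrite cnt_S, IH. reflexivity. Qed.

Lemma cnt_or P Q a n : cnt (fun k => P k || Q k) a n <= cnt P a n + cnt Q a n.
Proof.
  induction n as [|n IH]; [reflexivity |]. rewrite !cnt_S. destruct (P (a + n)), (Q (a + n)); simpl; lia.
Qed.

Lemma cnt_split P Q a n :
  cnt P a n = cnt (fun k => P k && Q k) a n + cnt (fun k => P k && negb (Q k)) a n.
Proof.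
  induction n as [|n IH]; [reflexivity |]. rewrite !cnt_S. destruct (P (a + n)), (Q (a + n)); simpl; lia.
Qed.

Lemma cnt_shift P a n : cnt P a n = cnt (fun k => P (a + k)) 0 n.
Proof. induction n as [|n IH]; [reflexivity |]. rewrite !cnt_S, IH. reflexivity. Qed.

Lemma cnt_translate_le (P Q : nat -> bool) b M :
  (forall n, n < M -> P n = true -> Q (n + b) = true) -> cnt P 0 M <= cnt Q b M.
Proof.
  intros H. rewrite (cnt_shift Q). apply cnt_mono. intros k Hk Pk. rewrite Nat.add_comm. apply H; [lia | exact Pk].
Qed.

Lemma cnt_window P T a : (forall k, P (k + T) = P k) -> cnt P a T = cnt P 0 T.
Proof.
  intros HP. induction a as [|a IH]; [reflexivity |]. rewrite <- IH.
  assert (E1 := cnt_add P a 1 T). assert (E2 := cnt_S P a T).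
  assert (E3 : cnt P a 1 = if P a then 1 else 0) by (unfold cnt; simpl; destruct (P a); reflexivity).
  rewrite Nat.add_comm, HP in E2. rewrite Nat.add_1_r in E1. simpl in E1. destruct (P a); lia.
Qed.

Lemma cnt_periods P T a k : (forall m, P (m + T) = P m) -> cnt P a (k * T) = k * cnt P 0 T.
Proof.
  intros HP. revert a. induction k as [|k IH]; intros a; [reflexivity |].
  simpl. rewrite cnt_add, IH, cnt_window by exact HP. lia.
Qed.

Lemma cnt_periodic_upper P T a n : 0 < T -> (forall m, P (m + T) = P m) ->
  cnt P a n <= (n / T + 1) * cnt P 0 T.
Proof.
  intros HT HP. rewrite <- (cnt_periods P T a) by exact HP.
  replace ((n / T + 1) * T) with (n + ((n / T + 1) * T - n)).
  - rewrite cnt_add. lia.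
  - assert (n = T * (n / T) + n mod T) by apply Nat.div_mod_eq.
    assert (n mod T < T) by (apply Nat.mod_upper_bound; lia). nia.
Qed.

Lemma mod_add_modulus k q : (k + q) mod q = k mod q.
Proof. rewrite <- (Nat.mul_1_l q) at 1. apply Nat.Div0.mod_add. Qed.

Lemma mod_reduce a d k : (a mod (k * d)) mod d = a mod d.
Proof.
  rewrite (Nat.div_mod_eq a (k * d)) at 2.
  replace (k * d * (a / (k * d)) + a mod (k * d)) with (a mod (k * d) + (k * (a / (k * d))) * d) by ring.
  symmetry. apply Nat.Div0.mod_add.
Qed.

Lemma mul_mod_compat a a' b b' n :
  a mod n = a' mod n -> b mod n = b' mod n -> (a * b) mod n = (a' * b') mod n.
Proof. intros Ha Hb. rewrite Nat.Div0.mul_mod, Ha, Hb, <- Nat.Div0.mul_mod. reflexivity. Qed.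

(* Finite statements about residues are decided by evaluation. *)
Lemma check_below (p : nat -> bool) n : forallb p (seq 0 n) = true -> forall k, k < n -> p k = true.
Proof. intros H k Hk. apply (proj1 (forallb_forall p _) H), in_seq. lia. Qed.

Lemma cnt_residue_once c q : c < q -> cnt (fun k => k mod q =? c) 0 q = 1.
Proof.
  intros Hc. rewrite (cnt_ext _ (fun k => k =? c)) by (intros k Hk; rewrite Nat.mod_small by lia; reflexivity).
  clear -Hc. induction q as [|q IH]; [lia |]. rewrite cnt_S. simpl.
  destruct (Nat.eq_dec c q) as [<-|Hne].
  - rewrite Nat.eqb_refl.
    enough (cnt (fun k => k =? c) 0 c = 0) by lia.
    rewrite (cnt_ext _ (fun _ => false)) by (intros k Hk; apply Nat.eqb_neq; lia). apply cnt_false.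
  - rewrite IH by lia. replace (q =? c) with false by (symmetry; apply Nat.eqb_neq; lia). reflexivity.
Qed.

Lemma cnt_residue_periodic q r a n : r < q ->
  cnt (fun k => k mod q =? r) a n <= n / q + 1.
Proof.
  intros Hr. rewrite (cnt_periodic_upper _ q) by (try lia; intros m; simpl; rewrite mod_add_modulus; reflexivity).
  rewrite cnt_residue_once by exact Hr. lia.
Qed.

Fixpoint sum_below (f : nat -> nat) (q : nat) : nat :=
  match q with 0 => 0 | S q' => sum_below f q' + f q' end.

Lemma sum_below_ext f g q : (forall r, r < q -> f r = g r) -> sum_below f q = sum_below g q.
Proof.
  induction q as [|q IH]; intros H; simpl; [reflexivity |].
  rewrite IH by (intros; apply H; lia). rewrite H by lia. reflexivity.
Qed.

Lemma sum_below_const c q : sum_below (fun _ => c) q = q * c.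
Proof. induction q; simpl; lia. Qed.

Lemma sum_below_add f g q : sum_below (fun r => f r + g r) q = sum_below f q + sum_below g q.
Proof. induction q; simpl; lia. Qed.

Lemma sum_below_indicator (b : bool) k q :
  sum_below (fun r => if b && (k =? r) then 1 else 0) q = if b && (k <? q) then 1 else 0.
Proof.
  induction q as [|q IH]; simpl; [destruct b; reflexivity |].
  rewrite IH. destruct b; simpl; [| reflexivity].
  destruct (Nat.ltb_spec k q), (Nat.ltb_spec k (S q)), (Nat.eqb_spec k q); lia.
Qed.

Lemma sum_below_select (p : nat -> bool) c n :
  sum_below (fun r => if p r then c else 0) n = cnt p 0 n * c.
Proof.
  induction n as [|n IH]; [reflexivity |]. cbn [sum_below]. rewrite IH, cnt_S. simpl (0 + n).
  destruct (p n); lia.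
Qed.

Lemma cnt_by_residue P q a n : 0 < q ->
  cnt P a n = sum_below (fun r => cnt (fun m => P m && (m mod q =? r)) a n) q.
Proof.
  intros Hq. induction n as [|n IH].
  - rewrite (sum_below_ext _ (fun _ => 0)), sum_below_const by reflexivity. rewrite Nat.mul_0_r. reflexivity.
  - rewrite cnt_S, (sum_below_ext _ (fun r => cnt (fun m => P m && (m mod q =? r)) a n
                      + (if P (a + n) && ((a + n) mod q =? r) then 1 else 0)))
      by (intros r _; rewrite cnt_S; reflexivity).
    rewrite sum_below_add, <- IH, sum_below_indicator.
    replace ((a + n) mod q <? q) with true by (symmetry; apply Nat.ltb_lt, Nat.mod_upper_bound; lia).
    destruct (P (a + n)); reflexivity.
Qed.

Lemma length_flat_map_seq {B : Type} (f : nat -> list B) m :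
  length (flat_map f (seq 0 m)) = sum_below (fun k => length (f k)) m.
Proof.
  induction m as [|m IH]; [reflexivity |].
  rewrite seq_S, flat_map_app, length_app, IH. simpl. rewrite app_nil_r. reflexivity.
Qed.

(* Shifting by a multiple of the period L that is = r mod q moves the residue class 0 onto
   the class r; hence all classes carry the same count of an L-periodic predicate. *)
Lemma class_count_uniform (H : nat -> bool) L Linv q r : 0 < q -> r < q ->
  (forall m k, H (m + k * L) = H m) -> (L * Linv) mod q = 1 ->
  cnt (fun m => H m && (m mod q =? r)) 0 (q * L) = cnt (fun m => H m && (m mod q =? 0)) 0 (q * L).
Proof.
  intros Hq Hr HP HL. set (s := r * Linv * L).
  assert (Hs : s mod q = r).
  { unfold s. replace (r * Linv * L) with (r * (L * Linv)) by ring.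
    rewrite Nat.Div0.mul_mod, HL, Nat.mul_1_r, Nat.Div0.mod_mod. apply Nat.mod_small, Hr. }
  rewrite <- (cnt_window _ _ s), cnt_shift.
  - apply cnt_ext. intros k _.
    replace (s + k) with (k + (r * Linv) * L) by (unfold s; ring). rewrite HP. f_equal.
    rewrite Nat.Div0.add_mod. fold s. rewrite Hs.
    assert (Ha : k mod q < q) by (apply Nat.mod_upper_bound; lia).
    destruct (Nat.eq_dec (k mod q) 0) as [E | E].
    + rewrite E, Nat.add_0_l, Nat.mod_small, !Nat.eqb_refl by lia. reflexivity.
    + rewrite (proj2 (Nat.eqb_neq _ _) E). apply Nat.eqb_neq. intros Heq.
      assert (Ed := Nat.div_mod_eq (k mod q + r) q). rewrite Heq in Ed.
      set (t := (k mod q + r) / q) in Ed. clearbody t. destruct t; nia.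
  - intros m. rewrite HP, (Nat.mul_comm q L), Nat.Div0.mod_add. reflexivity.
Qed.

Lemma class_equidistribution (H : nat -> bool) L Linv q r : 0 < q -> r < q ->
  (forall m k, H (m + k * L) = H m) -> (L * Linv) mod q = 1 ->
  cnt (fun m => H m && (m mod q =? r)) 0 (q * L) = cnt H 0 L.
Proof.
  intros Hq Hr HP HL.
  assert (Htot : cnt H 0 (q * L) = q * cnt H 0 L).
  { apply cnt_periods. intros m. rewrite <- (HP m 1). f_equal. lia. }
  rewrite (cnt_by_residue H q), (sum_below_ext _ (fun _ => cnt (fun m => H m && (m mod q =? 0)) 0 (q * L)))
    in Htot by (try lia; intros r' Hr'; apply (class_count_uniform _ _ Linv); assumption).
  rewrite sum_below_const in Htot. rewrite (class_count_uniform _ _ Linv) by assumption. nia.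
Qed.
End Counting.

Section Sieve.
Local Open Scope nat_scope.

Definition coprime6 (d : nat) : bool := negb (d mod 2 =? 0) && negb (d mod 3 =? 0).

Definition sieve_moduli (P : nat) : list nat := filter coprime6 (seq 2 P).

Definition sieve_root (P : nat) : nat := fold_right Nat.mul 1 (sieve_moduli P).

(* The sieve condition is periodic modulo the square of the product of the moduli. *)
Definition sieve_period (P : nat) : nat := sieve_root P * sieve_root P.

Definition sieve_free (P m : nat) : bool :=
  forallb (fun d => negb (m mod (d * d) =? 0)) (sieve_moduli P).

(* The residues mod 36 outside Q: divisible neither by 4 nor by 9. *)
Definition admissible (m : nat) : bool := negb (m mod 4 =? 0) && negb (m mod 9 =? 0).

Lemma coprime6_mod6 d : coprime6 d = true -> d mod 6 = 1 \/ d mod 6 = 5.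
Proof.
  unfold coprime6. rewrite andb_true_iff, !negb_true_iff, !Nat.eqb_neq. intros [H2 H3].
  assert (d = 6 * (d / 6) + d mod 6) by apply Nat.div_mod_eq.
  assert (d mod 6 < 6) by (apply Nat.mod_upper_bound; lia).
  assert (d = 2 * (d / 2) + d mod 2) by apply Nat.div_mod_eq.
  assert (d mod 2 < 2) by (apply Nat.mod_upper_bound; lia).
  assert (d = 3 * (d / 3) + d mod 3) by apply Nat.div_mod_eq.
  assert (d mod 3 < 3) by (apply Nat.mod_upper_bound; lia).
  lia.
Qed.

Lemma unit6_prod l : (forall d, In d l -> d mod 6 = 1 \/ d mod 6 = 5) ->
  fold_right Nat.mul 1 l mod 6 = 1 \/ fold_right Nat.mul 1 l mod 6 = 5.
Proof.
  induction l as [|d l IH]; intros H; [left; reflexivity |]. cbn [fold_right].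
  rewrite Nat.Div0.mul_mod.
  destruct (H d (or_introl eq_refl)) as [-> | ->], (IH (fun e He => H e (or_intror He))) as [-> | ->];
    simpl; auto.
Qed.

Lemma sieve_root_unit6 P : sieve_root P mod 6 = 1 \/ sieve_root P mod 6 = 5.
Proof. apply unit6_prod. intros d Hd. apply filter_In in Hd. apply coprime6_mod6, Hd. Qed.

(* L is coprime to 6, in particular positive. *)
Lemma sieve_period_pos P : 0 < sieve_period P.
Proof.
  assert (H := sieve_root_unit6 P). unfold sieve_period.
  destruct (sieve_root P); [simpl in H; lia | nia].
Qed.

(* The unit group of Z/36 has exponent 6. *)
Lemma sixth_power_mod36 k : k mod 6 = 1 \/ k mod 6 = 5 -> (k * k * (k * k * (k * k))) mod 36 = 1.
Proof.
  intros Hk. set (k0 := k mod 36). set (l := (k0 * k0) mod 36).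
  assert (Hk0 : k0 < 36) by (apply Nat.mod_upper_bound; lia).
  assert (E6 : k0 mod 6 = k mod 6).
  { assert (Ek : k = k0 + (6 * (k / 36)) * 6) by (unfold k0; generalize (Nat.div_mod_eq k 36); lia).
    rewrite Ek at 1. symmetry. apply Nat.Div0.mod_add. }
  assert (El : (k * k) mod 36 = l mod 36).
  { unfold l. rewrite Nat.Div0.mod_mod. apply mul_mod_compat; symmetry; apply Nat.Div0.mod_mod. }
  assert (E : (k * k * (k * k * (k * k))) mod 36 = (l * ((l * l) mod 36)) mod 36).
  { apply mul_mod_compat; [exact El |]. rewrite Nat.Div0.mod_mod. apply mul_mod_compat; exact El. }
  assert (C := check_below (fun j => negb ((j mod 6 =? 1) || (j mod 6 =? 5))
                 || (let l := (j * j) mod 36 in (l * ((l * l) mod 36)) mod 36 =? 1))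
                 36 ltac:(vm_compute; reflexivity) k0 Hk0).
  rewrite E. rewrite <- E6 in Hk. cbv beta zeta in C. fold l in C.
  destruct Hk as [H | H]; rewrite H in C; apply Nat.eqb_eq, C.
Qed.

(* L is a unit mod 36 with inverse L^2. *)
Lemma sieve_period_cube P : (sieve_period P * (sieve_period P * sieve_period P)) mod 36 = 1.
Proof.
  unfold sieve_period. apply sixth_power_mod36, sieve_root_unit6.
Qed.

Lemma admissible_mod36 m : admissible m = admissible (m mod 36).
Proof.
  assert (E4 := mod_reduce m 4 9). assert (E9 := mod_reduce m 9 4).
  change (9 * 4) with 36 in E4. change (4 * 9) with 36 in E9.
  unfold admissible. rewrite E4, E9. reflexivity.
Qed.

Lemma forallb_ext_in {A : Type} (f g : A -> bool) l :
  (forall x, In x l -> f x = g x) -> forallb f l = forallb g l.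
Proof.
  induction l as [|a l IH]; simpl; intros H; [reflexivity |].
  rewrite H, IH by auto. reflexivity.
Qed.

Lemma in_prod_divides d l : In d l -> Nat.divide d (fold_right Nat.mul 1 l).
Proof.
  induction l as [|e l IH]; simpl; intros H; [contradiction |].
  destruct H as [<- | H]; [apply Nat.divide_factor_l | apply Nat.divide_mul_r, IH, H].
Qed.

Lemma sieve_free_periodic P m k : sieve_free P (m + k * sieve_period P) = sieve_free P m.
Proof.
  apply forallb_ext_in. intros d Hd. destruct (in_prod_divides d _ Hd) as [e He].
  unfold sieve_period, sieve_root. rewrite He.
  replace (m + k * (e * d * (e * d))) with (m + (k * e * e) * (d * d)) by ring.
  rewrite Nat.Div0.mod_add. reflexivity.
Qed.

Definition sieve_survivors (P : nat) : nat := cnt (sieve_free P) 0 (sieve_period P).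

Lemma sieve_free_in_class P r : r < 36 ->
  cnt (fun m => sieve_free P m && (m mod 36 =? r)) 0 (36 * sieve_period P) = sieve_survivors P.
Proof.
  intros Hr. apply (class_equidistribution _ _ (sieve_period P * sieve_period P)); try lia.
  - apply sieve_free_periodic.
  - apply sieve_period_cube.
Qed.

Lemma sieved_out_in_class P r : r < 36 ->
  cnt (fun m => (m mod 36 =? r) && negb (sieve_free P m)) 0 (36 * sieve_period P)
  + sieve_survivors P = sieve_period P.
Proof.
  intros Hr.
  assert (E1 := cnt_split (fun m => m mod 36 =? r) (sieve_free P) 0 (36 * sieve_period P)).
  assert (E2 : cnt (fun m => m mod 36 =? r) 0 (36 * sieve_period P) = sieve_period P).
  { rewrite Nat.mul_comm, cnt_periods, cnt_residue_once by (try lia; intros m; rewrite mod_add_modulus; reflexivity).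
    lia. }
  rewrite (cnt_ext (fun k => (k mod 36 =? r) && sieve_free P k) (fun m => sieve_free P m && (m mod 36 =? r)))
    in E1 by (intros; apply andb_comm).
  rewrite sieve_free_in_class in E1 by exact Hr. lia.
Qed.

Lemma sieve_survivors_le P : sieve_survivors P <= sieve_period P.
Proof. assert (H := sieved_out_in_class P 0 ltac:(lia)). lia. Qed.

(* Exactly 24 of the 36 residue classes are admissible. *)
Lemma admissible_sieve_free_count P :
  cnt (fun m => sieve_free P m && admissible m) 0 (36 * sieve_period P) = 24 * sieve_survivors P.
Proof.
  rewrite (cnt_by_residue _ 36) by lia.
  rewrite (sum_below_ext _ (fun r => if admissible r then sieve_survivors P else 0)).
  - rewrite sum_below_select. replace (cnt admissible 0 36) with 24 by reflexivity. reflexivity.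
  - intros r Hr. rewrite (cnt_ext _ (fun m => admissible r && (sieve_free P m && (m mod 36 =? r)))).
    + destruct (admissible r); [exact (sieve_free_in_class P r Hr) | apply cnt_false].
    + intros k _. destruct (Nat.eqb_spec (k mod 36) r) as [E | E].
      * rewrite admissible_mod36, E. destruct (sieve_free P k), (admissible r); reflexivity.
      * destruct (sieve_free P k), (admissible k), (admissible r); reflexivity.
Qed.

Lemma admissible_sieve_free_periodic P m :
  (sieve_free P (m + 36 * sieve_period P) && admissible (m + 36 * sieve_period P))
  = (sieve_free P m && admissible m).
Proof.
  rewrite sieve_free_periodic, admissible_mod36, (admissible_mod36 m), (Nat.mul_comm 36), Nat.Div0.mod_add.
  reflexivity.
Qed.

Lemma square_times_squarefree n : 1 <= n ->
  exists k s, 1 <= k /\ n = k * k * s /\ (forall d, 2 <= d -> s mod (d * d) <> 0).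
Proof.
  induction n as [n IH] using lt_wf_ind. intros Hn.
  destruct (classic (exists d, 2 <= d /\ n mod (d * d) = 0)) as [[d [Hd Hm]] | Hno].
  - apply Nat.Div0.mod_divides in Hm. destruct Hm as [n' Hn'].
    assert (1 <= n') by (destruct n'; nia).
    assert (4 <= d * d) by nia.
    destruct (IH n' ltac:(nia) H) as [k [s [Hk [E Hs]]]].
    exists (d * k), s. repeat split; [nia | rewrite Hn', E; ring | exact Hs].
  - exists 1, n. repeat split; [lia | lia |]. intros d Hd Hm. apply Hno. eauto.
Qed.

Lemma squarefree_survives P s : (forall d, 2 <= d -> s mod (d * d) <> 0) ->
  sieve_free P s && admissible s = true.
Proof.
  intros Hq. apply andb_true_iff. split.
  - apply forallb_forall. intros d Hd. apply filter_In in Hd. destruct Hd as [Hd _].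
    apply in_seq in Hd. apply negb_true_iff, Nat.eqb_neq, Hq. lia.
  - apply andb_true_iff. split; apply negb_true_iff, Nat.eqb_neq; [apply (Hq 2) | apply (Hq 3)]; lia.
Qed.

(* Writing n = k^2 s with s squarefree covers [1, m^2] by the pairs (k, s) with k <= m,
   s <= m^2 / k^2 and s surviving the sieve. *)
Lemma square_cover P m :
  m * m <= sum_below (fun k => cnt (fun s => sieve_free P s && admissible s) 1 (m * m / (S k * S k))) m.
Proof.
  set (G := fun s => sieve_free P s && admissible s).
  set (pairs := flat_map (fun k => map (fun s => (S k, s)) (filter G (seq 1 (m * m / (S k * S k))))) (seq 0 m)).
  assert (Hl : length pairs = sum_below (fun k => cnt G 1 (m * m / (S k * S k))) m).
  { unfold pairs. rewrite length_flat_map_seq. apply sum_below_ext. intros k _. apply length_map. }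
  rewrite <- Hl, <- (length_map (fun p => fst p * fst p * snd p) pairs).
  rewrite <- (length_seq (m * m) 1) at 1.
  apply NoDup_incl_length; [apply seq_NoDup |].
  intros n Hn. apply in_seq in Hn.
  destruct (square_times_squarefree n ltac:(lia)) as [k [s [Hk [E Hq]]]].
  assert (1 <= s) by (destruct s; nia).
  assert (s <= m * m / (k * k)) by (apply Nat.div_le_lower_bound; nia).
  apply in_map_iff. exists (k, s). split; [simpl; lia |].
  apply in_flat_map. exists (pred k). split; [apply in_seq; nia |].
  replace (S (pred k)) with k by lia.
  apply in_map_iff. exists s. split; [reflexivity |].
  apply filter_In. split; [apply in_seq; lia | apply squarefree_survives, Hq].
Qed.
End Sieve.

Lemma INR_div_le (a b : nat) : (0 < b)%nat -> INR (a / b) <= INR a / INR b.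
Proof.
  intros Hb. assert (0 < INR b) by (apply lt_0_INR; lia).
  apply (Rmult_le_reg_r (INR b)); [assumption |].
  unfold Rdiv. rewrite Rmult_assoc, Rinv_l, Rmult_1_r by lra.
  rewrite <- mult_INR. apply le_INR. rewrite Nat.mul_comm. apply Nat.Div0.mul_div_le.
Qed.

Lemma nat_above (a : R) : exists m : nat, a < INR m.
Proof.
  destruct (archimed a) as [H1 _].
  destruct (Z_le_gt_dec (up a) 0) as [Hz | Hz].
  - exists 0%nat. simpl. apply IZR_le in Hz. lra.
  - exists (Z.to_nat (up a)). rewrite INR_IZR_INZ, Z2Nat.id by lia. lra.
Qed.

Lemma INR_sum_below_le (f : nat -> nat) (g : nat -> R) n :
  (forall k, (k < n)%nat -> INR (f k) <= g k) -> INR (sum_below f n) <= Rsum_below g n.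
Proof.
  induction n as [|n IH]; intros H; simpl; [lra |].
  rewrite plus_INR. assert (H1 := H n ltac:(lia)). assert (IHn := IH (fun k Hk => H k ltac:(lia))). lra.
Qed.

Lemma Rsum_below_affine (a c : R) m :
  Rsum_below (fun k => (a * / (INR (S k) * INR (S k)) + 1) * c) m = a * c * inv_sq_sum m + INR m * c.
Proof.
  unfold inv_sq_sum. induction m as [|m IH]; cbn [Rsum_below]; [simpl; ring |].
  rewrite IH, (S_INR m). ring.
Qed.

Lemma quadratic_growth_bound (a b : R) :
  (forall m : nat, (1 <= m)%nat -> INR m * INR m <= a * (INR m * INR m) + b * INR m) -> 1 <= a.
Proof.
  intros H. destruct (Rle_dec 1 a) as [| Ha]; [assumption | exfalso]. apply Rnot_le_lt in Ha.
  destruct (nat_above (Rmax 1 (b / (1 - a)))) as [m Hm].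
  assert (Hm1 : 1 < INR m) by (generalize (Rmax_l 1 (b / (1 - a))); lra).
  assert (Hm2 : b / (1 - a) < INR m) by (generalize (Rmax_r 1 (b / (1 - a))); lra).
  assert (Hmn : (1 <= m)%nat) by (destruct m; [simpl in Hm1; lra | lia]).
  specialize (H m Hmn).
  assert (b < (1 - a) * INR m).
  { apply (Rmult_lt_compat_l (1 - a)) in Hm2; [| lra].
    replace ((1 - a) * (b / (1 - a))) with b in Hm2 by (field; lra). lra. }
  nra.
Qed.

Lemma admissible_survivors_in_window P N :
  INR (cnt (fun s => sieve_free P s && admissible s) 1 N)
  <= (INR N / (36 * INR (sieve_period P)) + 1) * (24 * INR (sieve_survivors P)).
Proof.
  assert (HT : (0 < 36 * sieve_period P)%nat) by (generalize (sieve_period_pos P); lia).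
  eapply Rle_trans.
  { apply le_INR, (cnt_periodic_upper _ (36 * sieve_period P)); [exact HT |].
    intros m. apply admissible_sieve_free_periodic. }
  rewrite admissible_sieve_free_count, !mult_INR, plus_INR.
  replace (INR 36) with 36 by (simpl; ring). replace (INR 24) with 24 by (simpl; ring).
  apply Rmult_le_compat_r; [generalize (pos_INR (sieve_survivors P)); lra |].
  assert (H := INR_div_le N _ HT). rewrite mult_INR in H. replace (INR 36) with 36 in H by (simpl; ring).
  simpl (INR 1). lra.
Qed.

(* The covering of [1, m^2] by k^2 s, counted with the Basel bound, gives
   m^2 <= (24 c / 36 L) (pi^2/6) m^2 + 24 c m. *)
Lemma square_cover_bound P m :
  INR m * INR m <= 24 * INR (sieve_survivors P) / (36 * INR (sieve_period P)) * (PI ^ 2 / 6) * (INR m * INR m)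
                   + 24 * INR (sieve_survivors P) * INR m.
Proof.
  set (L := INR (sieve_period P)). set (c := 24 * INR (sieve_survivors P)).
  assert (HL : 0 < L) by (apply lt_0_INR, sieve_period_pos).
  assert (Hc : 0 <= c) by (generalize (pos_INR (sieve_survivors P)); unfold c; lra).
  eapply Rle_trans; [rewrite <- mult_INR; apply le_INR, (square_cover P m) |].
  eapply Rle_trans.
  { apply (INR_sum_below_le _ (fun k => (INR m * INR m / (36 * L) * / (INR (S k) * INR (S k)) + 1) * c)).
    intros k _. eapply Rle_trans; [apply admissible_survivors_in_window |]. fold L c.
    apply Rmult_le_compat_r; [exact Hc |]. apply Rplus_le_compat_r.
    assert (Hk : 0 < INR (S k)) by (apply lt_0_INR; lia).
    assert (H := INR_div_le (m * m) (S k * S k) ltac:(nia)). rewrite !mult_INR in H.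
    apply (Rmult_le_compat_r (/ (36 * L))) in H; [| left; apply Rinv_0_lt_compat; lra].
    replace (INR m * INR m / (36 * L) * / (INR (S k) * INR (S k)))
      with (INR m * INR m / (INR (S k) * INR (S k)) * / (36 * L)) by (field; lra).
    exact H. }
  rewrite Rsum_below_affine.
  assert (Hcoef : 0 <= INR m * INR m / (36 * L) * c)
    by (apply Rmult_le_pos; [apply Rdiv_le_0_compat; [apply Rle_0_sqr | lra] | exact Hc]).
  assert (H := Rmult_le_compat_l _ _ _ Hcoef (basel_upper m)).
  replace (c / (36 * L) * (PI ^ 2 / 6) * (INR m * INR m)) with (INR m * INR m / (36 * L) * c * (PI ^ 2 / 6))
    by (field; lra).
  lra.
Qed.

Lemma sieve_density P : 9 * INR (sieve_period P) <= INR (sieve_survivors P) * PI ^ 2.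
Proof.
  assert (HL : 0 < INR (sieve_period P)) by (apply lt_0_INR, sieve_period_pos).
  assert (Ha := quadratic_growth_bound _ _ (fun m _ => square_cover_bound P m)).
  apply (Rmult_le_compat_r (9 * INR (sieve_period P))) in Ha; [| lra].
  replace (24 * INR (sieve_survivors P) / (36 * INR (sieve_period P)) * (PI ^ 2 / 6) * (9 * INR (sieve_period P)))
    with (INR (sieve_survivors P) * PI ^ 2) in Ha by (field; lra).
  lra.
Qed.

Section NonSquarefree.
Local Open Scope nat_scope.

Definition divisible_by_square (l : list nat) (m : nat) : bool := existsb (fun d => m mod (d * d) =? 0) l.

Definition square_multiples_bound (M : nat) (l : list nat) : nat :=
  fold_right (fun d acc => M / (d * d) + 1 + acc) 0 l.

Lemma cnt_divisible_by_square l b M : (forall d, In d l -> 0 < d) ->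
  cnt (divisible_by_square l) b M <= square_multiples_bound M l.
Proof.
  induction l as [|d l IH]; intros Hl.
  - unfold divisible_by_square. simpl. rewrite cnt_false. lia.
  - assert (Hd : 0 < d * d) by (assert (0 < d) by (apply Hl; left; reflexivity); nia).
    rewrite (cnt_ext _ (fun m => (m mod (d * d) =? 0) || divisible_by_square l m)) by reflexivity.
    eapply Nat.le_trans; [apply cnt_or |]. simpl.
    assert (cnt (fun m => m mod (d * d) =? 0) b M <= M / (d * d) + 1) by (apply cnt_residue_periodic; lia).
    assert (cnt (divisible_by_square l) b M <= square_multiples_bound M l) by (apply IH; intros; apply Hl; right; assumption).
    lia.
Qed.

Lemma not_squarefree_witness m : 0 < m -> ~ squarefree m -> exists d, 2 <= d /\ m mod (d * d) = 0.
Proof.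
  intros Hm Hns. apply NNPP. intros Hno. apply Hns. split; [exact Hm |].
  intros d Hd. apply NNPP. intros Hd1. apply Hno. exists d.
  assert (d <> 0) by (intros ->; destruct Hd as [z Hz]; lia).
  split; [lia | apply Nat.Lcm0.mod_divide, Hd].
Qed.

Lemma admissible_square_divisor m d : admissible m = true -> m mod (d * d) = 0 -> coprime6 d = true.
Proof.
  unfold admissible, coprime6. rewrite !andb_true_iff, !negb_true_iff, !Nat.eqb_neq.
  intros [H4 H9] Hd. apply Nat.Div0.mod_divides in Hd. destruct Hd as [z Hz].
  split; intros Hp; apply Nat.Div0.mod_divides in Hp; destruct Hp as [e ->].
  - apply H4. rewrite Hz. replace (2 * e * (2 * e) * z) with (e * e * z * 4) by ring. apply Nat.Div0.mod_mul.
  - apply H9. rewrite Hz. replace (3 * e * (3 * e) * z) with (e * e * z * 9) by ring. apply Nat.Div0.mod_mul.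
Qed.

Lemma non_squarefree_caught P N m : admissible m = true -> 0 < m -> m < N -> ~ squarefree m ->
  negb (sieve_free P m) || divisible_by_square (seq (S P) (Nat.sqrt N - P)) m = true.
Proof.
  intros Hadm Hm HmN Hns. destruct (not_squarefree_witness m Hm Hns) as [d [Hd Hmod]].
  assert (HdN : d <= Nat.sqrt N).
  { assert (d * d <= m) by (apply Nat.Div0.mod_divides in Hmod; destruct Hmod as [z ->]; destruct z; nia).
    rewrite <- (Nat.sqrt_square d). apply Nat.sqrt_le_mono. lia. }
  apply orb_true_iff. destruct (le_lt_dec d P) as [HdP | HdP].
  - left. apply negb_true_iff. unfold sieve_free. apply not_true_iff_false. rewrite forallb_forall.
    intros Hall. assert (Hin : In d (sieve_moduli P)).
    { apply filter_In. split; [apply in_seq; lia | exact (admissible_square_divisor m d Hadm Hmod)]. }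
    specialize (Hall d Hin). rewrite Hmod in Hall. discriminate.
  - right. apply existsb_exists. exists d. split; [apply in_seq; lia | apply Nat.eqb_eq, Hmod].
Qed.

(* Counting bound: n |-> n + b maps T into the admissible non-squarefree numbers of the class r
   in [b, b + M), which are sieved out (a proportion (L - c)/L of the class up to one period)
   or divisible by a large square. *)
Lemma nonsquarefree_class_count P r b M (T : nat -> bool) : r < 36 -> admissible r = true ->
  (forall n, n < M -> T n = true -> (n + b) mod 36 = r /\ 0 < n + b /\ ~ squarefree (n + b)) ->
  cnt T 0 M <= (M / (36 * sieve_period P) + 1) * (sieve_period P - sieve_survivors P)
               + square_multiples_bound M (seq (S P) (Nat.sqrt (b + M) - P)).
Proof.
  intros Hr Hadm HT.
  set (sieved := fun m => (m mod 36 =? r) && negb (sieve_free P m)).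
  set (large := divisible_by_square (seq (S P) (Nat.sqrt (b + M) - P))).
  assert (C1 : cnt T 0 M <= cnt (fun m => sieved m || large m) b M).
  { apply cnt_translate_le. intros n Hn HTn. destruct (HT n Hn HTn) as [Hcl [Hpos Hns]].
    assert (Hadm' : admissible (n + b) = true) by (rewrite admissible_mod36, Hcl; exact Hadm).
    assert (Hc := non_squarefree_caught P (b + M) (n + b) Hadm' Hpos ltac:(lia) Hns).
    unfold sieved, large. rewrite Hcl, Nat.eqb_refl. exact Hc. }
  assert (C2 : cnt sieved b M <= (M / (36 * sieve_period P) + 1) * cnt sieved 0 (36 * sieve_period P)).
  { apply cnt_periodic_upper; [generalize (sieve_period_pos P); lia |]. intros m. unfold sieved.
    rewrite sieve_free_periodic, (Nat.mul_comm 36), Nat.Div0.mod_add. reflexivity. }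
  assert (C3 := sieved_out_in_class P r Hr). fold sieved in C3.
  assert (C4 : cnt large b M <= square_multiples_bound M (seq (S P) (Nat.sqrt (b + M) - P)))
    by (apply cnt_divisible_by_square; intros d Hd; apply in_seq in Hd; lia).
  assert (C5 := cnt_or sieved large b M).
  replace (sieve_period P - sieve_survivors P) with (cnt sieved 0 (36 * sieve_period P)) by lia.
  lia.
Qed.
End NonSquarefree.

Lemma square_multiples_tail M t j : (1 <= t)%nat ->
  INR (square_multiples_bound M (seq (S t) j)) <= INR M / INR t + INR j.
Proof.
  revert t. induction j as [|j IH]; intros t Ht.
  - simpl. rewrite Rplus_0_r. apply Rdiv_le_0_compat; [apply pos_INR | apply lt_0_INR; lia].
  - change (seq (S t) (S j)) with (S t :: seq (S (S t)) j). cbn [square_multiples_bound fold_right].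
    fold (square_multiples_bound M (seq (S (S t)) j)).
    assert (IHt := IH (S t) ltac:(lia)).
    assert (Hdiv := INR_div_le M (S t * S t) ltac:(nia)).
    rewrite !plus_INR. rewrite mult_INR, S_INR in Hdiv. rewrite S_INR in IHt. rewrite (S_INR j).
    assert (Ht' : 1 <= INR t) by (apply (le_INR 1); lia). assert (HM := pos_INR M).
    assert (E : INR M / INR t
                = INR M / ((INR t + 1) * (INR t + 1)) + INR M / (INR t + 1)
                  + INR M / (INR t * ((INR t + 1) * (INR t + 1)))) by (field; lra).
    assert (0 <= INR M / (INR t * ((INR t + 1) * (INR t + 1))))
      by (apply Rdiv_le_0_compat; [lra | apply Rmult_lt_0_compat; nra]).
    simpl (INR 1). lra.
Qed.

Lemma nonsquarefree_class_count_real P r b M (T : nat -> bool) : (1 <= P)%nat -> (r < 36)%nat ->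
  admissible r = true ->
  (forall n, (n < M)%nat -> T n = true -> ((n + b) mod 36 = r /\ 0 < n + b /\ ~ squarefree (n + b))%nat) ->
  INR (cnt T 0 M) <= (INR M / (36 * INR (sieve_period P)) + 1) * (INR (sieve_period P) - INR (sieve_survivors P))
                     + (INR M / INR P + INR (Nat.sqrt (b + M))).
Proof.
  intros HP Hr Hadm HT.
  assert (HL : (0 < 36 * sieve_period P)%nat) by (generalize (sieve_period_pos P); lia).
  assert (Hcnt := le_INR _ _ (nonsquarefree_class_count P r b M T Hr Hadm HT)).
  rewrite plus_INR, mult_INR, plus_INR, minus_INR in Hcnt by apply sieve_survivors_le.
  assert (Hdiv := INR_div_le M _ HL). rewrite mult_INR in Hdiv. replace (INR 36) with 36 in Hdiv by (simpl; ring).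
  assert (Htail := square_multiples_tail M P (Nat.sqrt (b + M) - P) HP).
  assert (Hsub : INR (Nat.sqrt (b + M) - P) <= INR (Nat.sqrt (b + M))) by (apply le_INR; lia).
  assert (Hc := le_INR _ _ (sieve_survivors_le P)).
  assert (Hprod : (INR (M / (36 * sieve_period P)) + 1) * (INR (sieve_period P) - INR (sieve_survivors P))
                  <= (INR M / (36 * INR (sieve_period P)) + 1) * (INR (sieve_period P) - INR (sieve_survivors P)))
    by (apply Rmult_le_compat_r; lra).
  simpl (INR 1) in *. lra.
Qed.

Lemma nine_over_pi2_bounds : 0 < 9 / PI ^ 2 < 1.
Proof.
  assert (Hpi0 := PI_RGT_0). assert (Hpi : 9 < PI ^ 2) by (generalize PI2_3_2; nra).
  split; [apply Rdiv_lt_0_compat; lra |].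
  apply (Rmult_lt_reg_r (PI ^ 2)); [lra |]. unfold Rdiv. rewrite Rmult_assoc, Rinv_l by lra. lra.
Qed.

Lemma main_term_bound (M L c : R) : 0 < L -> 9 * L <= c * PI ^ 2 -> 0 <= M ->
  (M / (36 * L) + 1) * (L - c) <= M / 36 * (1 - 9 / PI ^ 2) + L.
Proof.
  intros HL Hd HM. assert (Hpi0 := PI_RGT_0). assert (Hc : 0 <= c) by nra.
  assert (Hcl : 9 / PI ^ 2 <= c / L).
  { apply (Rmult_le_reg_r (PI ^ 2 * L)); [nra |].
    replace (9 / PI ^ 2 * (PI ^ 2 * L)) with (9 * L) by (field; lra).
    replace (c / L * (PI ^ 2 * L)) with (c * PI ^ 2) by (field; lra). lra. }
  replace ((M / (36 * L) + 1) * (L - c)) with (M / 36 * (1 - c / L) + (L - c)) by (field; lra).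
  assert (M / 36 * (1 - c / L) <= M / 36 * (1 - 9 / PI ^ 2)) by (apply Rmult_le_compat_l; lra). lra.
Qed.

Lemma large_square_term_small (eps x M P : R) : 0 < eps -> 1 <= x -> 28800 / eps < P ->
  0 <= M -> M <= x + 1 -> 36 * (M / P) <= eps * x / 400.
Proof.
  intros He Hx HP HM0 HM.
  assert (HP0 : 0 < P) by (assert (0 < 28800 / eps) by (apply Rdiv_lt_0_compat; lra); lra).
  assert (72 / P <= eps / 400).
  { apply (Rmult_le_reg_r P); [lra |]. apply (Rmult_lt_compat_r eps) in HP; [| lra].
    replace (28800 / eps * eps) with 28800 in HP by (field; lra). field_simplify; lra. }
  replace (36 * (M / P)) with (M * (36 / P)) by (field; lra).
  assert (0 <= 36 / P) by (apply Rdiv_le_0_compat; lra).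
  replace (eps * x / 400) with (x * (eps / 400)) by field. nra.
Qed.

Lemma sqrt_term_small (eps x D : R) : 0 < eps -> 1 <= x -> 3 * 14400 ^ 2 / eps ^ 2 <= x ->
  0 <= D -> D * D <= 2 * x + 1 -> 36 * D <= eps * x / 400.
Proof.
  intros He Hx1 Hx HD0 HD. set (y := eps * x / 14400).
  assert (Hy : 0 <= y) by (unfold y; apply Rdiv_le_0_compat; nra).
  assert (Hxe : 3 * 14400 ^ 2 <= x * eps ^ 2).
  { apply (Rmult_le_compat_r (eps ^ 2)) in Hx; [| nra].
    replace (3 * 14400 ^ 2 / eps ^ 2 * eps ^ 2) with (3 * 14400 ^ 2) in Hx by (field; lra). lra. }
  assert (3 * x <= y * y).
  { unfold y. replace (eps * x / 14400 * (eps * x / 14400)) with (x * (x * eps ^ 2) / 14400 ^ 2) by field.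
    apply (Rmult_le_reg_r (14400 ^ 2)); [nra |].
    replace (x * (x * eps ^ 2) / 14400 ^ 2 * 14400 ^ 2) with (x * (x * eps ^ 2)) by field.
    replace (3 * x * 14400 ^ 2) with (x * (3 * 14400 ^ 2)) by ring.
    apply Rmult_le_compat_l; lra. }
  assert (D <= y) by (destruct (Rle_dec D y) as [| Hn]; [assumption | apply Rnot_le_lt in Hn; nra]).
  unfold y in *. lra.
Qed.

(* The final estimate: for x large, each of the four error terms is at most eps x / 400, while
   the main term is at most (1 - 9/pi^2) x. *)
Lemma class_density_arith (x eps M L c P D cu : R) :
  0 < eps -> 1 + 400 / eps + 14400 * L / eps + 3 * 14400 ^ 2 / eps ^ 2 <= x ->
  0 < L -> 9 * L <= c * PI ^ 2 -> 28800 / eps < P ->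
  0 <= M -> M <= x + 1 -> 0 <= D -> D * D <= 2 * x + 1 ->
  cu <= (M / (36 * L) + 1) * (L - c) + (M / P + D) ->
  36 * cu / x <= 1 - 9 / PI ^ 2 + eps / 100.
Proof.
  intros He Hx HL Hd HP HM0 HM HD0 HD Hcu.
  assert (H1 : 0 <= 400 / eps) by (apply Rdiv_le_0_compat; lra).
  assert (H2 : 0 <= 14400 * L / eps) by (apply Rdiv_le_0_compat; lra).
  assert (H3 : 0 <= 3 * 14400 ^ 2 / eps ^ 2) by (apply Rdiv_le_0_compat; nra).
  assert (Hq := nine_over_pi2_bounds).
  assert (Hmain := main_term_bound M L c HL Hd HM0).
  assert (E1 : 1 <= eps * x / 400).
  { replace (eps * x / 400) with (x / (400 / eps)) by (field; lra).
    apply (Rmult_le_reg_r (400 / eps)); [apply Rdiv_lt_0_compat; lra |]. field_simplify; lra. }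
  assert (E2 : 36 * L <= eps * x / 400).
  { apply (Rmult_le_reg_r (/ eps)); [apply Rinv_0_lt_compat; lra |].
    replace (eps * x / 400 * / eps) with (x / 400) by (field; lra).
    replace (14400 * L / eps) with (400 * (36 * L * / eps)) in Hx by (field; lra). lra. }
  assert (E3 := large_square_term_small eps x M P He ltac:(lra) HP HM0 HM).
  assert (E4 := sqrt_term_small eps x D He ltac:(lra) ltac:(lra) HD0 HD).
  apply (Rmult_le_reg_r x); [lra |]. unfold Rdiv at 1. rewrite Rmult_assoc, Rinv_l, Rmult_1_r by lra.
  nra.
Qed.

Lemma nonsquarefree_class_sparse eps : eps > 0 ->
  exists X0 : R, forall (x : R) (r b : nat) (T : nat -> bool),
    x >= X0 -> (r < 36)%nat -> admissible r = true -> INR b <= x ->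
    (forall n, (n < Z.to_nat (up x))%nat -> T n = true ->
       ((n + b) mod 36 = r /\ 0 < n + b /\ ~ squarefree (n + b))%nat) ->
    36 * INR (cnt T 0 (Z.to_nat (up x))) / x <= 1 - 9 / PI ^ 2 + eps / 100.
Proof.
  intros Heps. destruct (nat_above (28800 / eps)) as [P HP].
  assert (HP1 : (1 <= P)%nat).
  { destruct P; [| lia]. assert (0 < 28800 / eps) by (apply Rdiv_lt_0_compat; lra). simpl in HP. lra. }
  set (L := INR (sieve_period P)).
  exists (1 + 400 / eps + 14400 * L / eps + 3 * 14400 ^ 2 / eps ^ 2).
  intros x r b T Hx Hr Hadm Hb HT. set (M := Z.to_nat (up x)).
  assert (Hx0 : 0 <= 400 / eps + 14400 * L / eps + 3 * 14400 ^ 2 / eps ^ 2).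
  { assert (0 < L) by (apply lt_0_INR, sieve_period_pos).
    assert (0 <= 400 / eps) by (apply Rdiv_le_0_compat; lra).
    assert (0 <= 14400 * L / eps) by (apply Rdiv_le_0_compat; lra).
    assert (0 <= 3 * 14400 ^ 2 / eps ^ 2) by (apply Rdiv_le_0_compat; nra). lra. }
  assert (HM : INR M <= x + 1).
  { destruct (archimed x) as [Ha1 Ha2]. assert (Hup : (0 <= up x)%Z) by (apply le_IZR; lra).
    unfold M. rewrite INR_IZR_INZ, Z2Nat.id by exact Hup. lra. }
  assert (HD : INR (Nat.sqrt (b + M)) * INR (Nat.sqrt (b + M)) <= 2 * x + 1).
  { rewrite <- mult_INR. assert (Hs := proj1 (Nat.sqrt_spec (b + M) ltac:(lia))).
    apply le_INR in Hs. rewrite plus_INR in Hs. lra. }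
  apply (class_density_arith x eps (INR M) L (INR (sieve_survivors P)) (INR P) (INR (Nat.sqrt (b + M))));
    try lra; try apply pos_INR.
  - apply lt_0_INR, sieve_period_pos.
  - apply sieve_density.
  - apply (nonsquarefree_class_count_real P r b M T HP1 Hr Hadm HT).
Qed.

Lemma class_member (A : nat -> bool) x v : delta_res A x v > 0 -> exists b, A b = true /\ (b mod 36 = v)%nat.
Proof.
  intros Hv. unfold delta_res, count_res in Hv.
  destruct (filter (fun n => A n && (n mod 36 =? v)%nat) (range_upto x)) as [| b l] eqn:EF.
  - simpl in Hv. unfold Rdiv in Hv. rewrite Rmult_0_r, Rmult_0_l in Hv. lra.
  - assert (Hb : In b (filter (fun n => A n && (n mod 36 =? v)%nat) (range_upto x))) by (rewrite EF; left; reflexivity).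
    apply filter_In in Hb. destruct Hb as [_ Hb]. apply andb_true_iff in Hb.
    exists b. split; [apply Hb | apply Nat.eqb_eq, Hb].
Qed.

Lemma inadmissible_in_Q r : (r < 36)%nat -> admissible r = false -> In r Qset.
Proof.
  intros Hr Hadm.
  assert (C := check_below (fun r => admissible r || existsb (Nat.eqb r) Qset) 36 ltac:(vm_compute; reflexivity) r Hr).
  cbv beta in C. rewrite Hadm in C. apply existsb_exists in C. destruct C as [y [Hy E]]. apply Nat.eqb_eq in E. subst y. exact Hy.
Qed.

Theorem lemma1 :
  forall eps : R, eps > 0 ->
  exists X0 : R, forall (x : R) (A : nat -> bool),
    x >= X0 ->
    subset_1x A x ->
    INR (cardA A x) > (delta0 + eps) * x ->
    (forall a b : nat, A a = true -> A b = true -> ~ squarefree (a + b)) ->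
    (exists n, A n = true /\ (n mod 4 <> 0)%nat) ->
    (exists n, A n = true /\ (n mod 9 <> 0)%nat) ->
    (exists n, A n = true /\ (n mod 4 <> 2)%nat) ->
    forall u v : nat, inU A x eps u -> inV A x v ->
      In ((u + v) mod 36)%nat Qset.
Proof.
  intros eps Heps. destruct (nonsquarefree_class_sparse eps Heps) as [X0 HX0]. exists X0.
  intros x A Hx Hsub _ Hsq _ _ _ u v [Hu HU] [Hv HV].
  assert (Hr : ((u + v) mod 36 < 36)%nat) by (apply Nat.mod_upper_bound; lia).
  destruct (admissible ((u + v) mod 36)) eqn:Hadm; [exfalso | exact (inadmissible_in_Q _ Hr Hadm)].
  destruct (class_member A x v HV) as [b [HAb Hbv]].
  assert (Hsparse := HX0 x _ b (fun n => A n && (n mod 36 =? u)%nat) Hx Hr Hadm (proj2 (Hsub b HAb))).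
  enough (Hcount : 36 * INR (count_res A x u) / x <= 1 - 9 / PI ^ 2 + eps / 100)
    by (unfold delta_res in HU; lra).
  apply Hsparse. intros n _ Hn. apply andb_true_iff in Hn. destruct Hn as [HAn Hnu]. apply Nat.eqb_eq in Hnu.
  split; [| split].
  - rewrite Nat.Div0.add_mod, Hnu, Hbv. reflexivity.
  - destruct (Hsub n HAn). lia.
  - exact (Hsq n b HAn HAb).
Qed.
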